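(* For every integer $k\geq1$ and every polynomial $r(x)$, the function $$H(x,y)=\frac{\big[(1-r(x)^2)^{2k}+2k\,r(x)(1-r(x)^2)^k y+k y^2\big]^{2k-1}}{\big[(1-r(x)^2)^{2k-1}+(2k-1)\,r(x)(1-r(x)^2)^{k-1}y+\tfrac{2k-1}{2}y^2\big]^{2k}}$$ is a first integral of a Li\'enard type equation of the form $$\frac{dx}{dt}=-y+r_2(x),\qquad \frac{dy}{dt}=y\,r_4(x)$$ for suitable polynomials $r_2,r_4$. *)

From HB Require Import structures.
From mathcomp Require Import all_boot all_order all_algebra.
From mathcomp Require Import all_classical all_reals all_analysis.
Set Implicit Arguments. Unset Strict Implicit. Unset Printing Implicit Defensive.
Import Order.TTheory GRing.Theory Num.Theory.
Import numFieldNormedType.Exports.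
Local Open Scope ring_scope.
Local Open Scope classical_set_scope.

Definition Hnum {R : realType} (k : nat) (r : {poly R}) (x y : R) : R :=
  (1 - r.[x] ^+ 2) ^+ (2 * k) + (2 * k)%:R * r.[x] * (1 - r.[x] ^+ 2) ^+ k * y
  + k%:R * y ^+ 2.

Definition Hden {R : realType} (k : nat) (r : {poly R}) (x y : R) : R :=
  (1 - r.[x] ^+ 2) ^+ (2 * k - 1)
  + (2 * k - 1)%:R * r.[x] * (1 - r.[x] ^+ 2) ^+ (k - 1) * y
  + ((2 * k - 1)%:R / 2) * y ^+ 2.

Definition Hfun {R : realType} (k : nat) (r : {poly R}) (x y : R) : R :=
  Hnum k r x y ^+ (2 * k - 1) / Hden k r x y ^+ (2 * k).

Definition first_integral {R : realType} (H P Q : R -> R -> R) (U : set (R * R))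
  : Prop :=
  forall x y, U (x, y) ->
    derivable (fun s => H s y) x 1 /\ derivable (fun s => H x s) y 1 /\
    derive1 (fun s => H s y) x * P x y + derive1 (fun s => H x s) y * Q x y = 0.

From HB Require Import structures.
From mathcomp Require Import all_boot all_order all_algebra.
From mathcomp Require Import all_classical all_reals all_analysis.
From mathcomp Require Import ring zify.
Import Order.TTheory GRing.Theory Num.Theory.
Import numFieldNormedType.Exports.
Local Open Scope ring_scope.
Local Open Scope classical_set_scope.

(* Since H depends on x only through s = r(x), the chain rule reduces the claim
   to the case r = X, with r2 = R2(r) and r4 = R4(r) r' for the polynomials
   R2 = s ((2k-2) u^(k-1) - (2k+1) u^k) and R4 = (s (2k u^(k-1) - (2k-1) u^k))',
   where u = 1 - s^2.  For r = X write H = N^(2k-1) / D^(2k): the derivative of H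
   along (P, Q) is N^(2k-2) / D^(2k+1) times
     ((2k-1) N_s D - 2k N D_s) P + ((2k-1) N_y D - 2k N D_y) Q,
   and this polynomial vanishes identically. *)

Section Derivatives.
Context {R : realType}.

Lemma is_derive_quadratic (a b c x : R) :
  is_derive x 1 (fun t => a + b * t + c * t ^+ 2) (b + 2 * c * x).
Proof.
have -> : (fun t => a + b * t + c * t ^+ 2) = horner (a%:P + b *: 'X + c *: 'X^2).
  by apply/funext => t; rewrite !hornerE.
by apply: is_derive_eq; rewrite !poly.derivE !hornerE; ring.
Qed.

Lemma is_derive_pow_div_pow {f g : R -> R} {x df dg : R} {m n : nat} :
  is_derive x 1 f df -> is_derive x 1 g dg -> g x != 0 ->
  is_derive x 1 (fun t => f t ^+ m.+1 / g t ^+ n)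
    (f x ^+ m / g x ^+ n.+1 * (m.+1%:R * df * g x - n%:R * f x * dg)).
Proof.
move=> fdf gdg gx0.
have gnx0 : (g ^+ n) x != 0 by rewrite exprfctE expf_neq0.
have -> : (fun t => f t ^+ m.+1 / g t ^+ n) = f ^+ m.+1 * (fun t => ((g ^+ n) t)^-1).
  by apply/funext => t; rewrite !exprfctE.
have := is_deriveM (is_deriveX m.+1 fdf)
  (@is_deriveV _ (g ^+ n) x _ 1 gnx0 (is_deriveX n gdg)).
move=> /is_derive_eq; apply.
rewrite !exprfctE /= /GRing.scale /=.
case: n gnx0 => [|n] /= _.
  by rewrite !(expr0, expr1, mul0r, mulr0, add0r, subr0, invr1, mul1r); field.
have Gn0 : g x ^+ n != 0 by rewrite expf_neq0.
rewrite !exprS; move: (f x ^+ m) (g x ^+ n) Gn0 => F G G0.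
by field; rewrite gx0 G0.
Qed.
End Derivatives.

Section FirstIntegral.
Context {R : realType}.
Implicit Types (H P Q : R -> R -> R) (U : set (R * R)).

Lemma first_integral_is_derive {H P Q U} :
  (forall x y, U (x, y) -> exists hx hy,
    [/\ is_derive x 1 (H ^~ y) hx, is_derive y 1 (H x) hy
      & hx * P x y + hy * Q x y = 0]) ->
  first_integral H P Q U.
Proof.
move=> hH x y /hH[hx [hy [dx dy e]]].
by rewrite !derive1E !derive_val; case: dx; case: dy.
Qed.

Lemma first_integral_comp {H P Q U} {f : R -> R} :
  (forall x, derivable f x 1) -> first_integral H P Q U ->
  first_integral (fun x y => H (f x) y) (fun x y => P (f x) y)
    (fun x y => Q (f x) y * derive1 f x) [set p | U (f p.1, p.2)].
Proof.
move=> df hH; apply: first_integral_is_derive => x y /hH[dHx [dHy eH]].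
exists (derive1 (H ^~ y) (f x) * derive1 f x), (derive1 (H (f x)) y); split.
- rewrite !derive1E; exact: (is_derive1_comp (derivableP dHx) (derivableP (df x))).
- by rewrite derive1E; apply: derivableP.
- by rewrite mulrAC mulrA -mulrDl eH mul0r.
Qed.
End FirstIntegral.

Section LienardFirstIntegral.
Variables (R : realType) (k : nat).
Hypothesis k_gt0 : (0 < k)%N.

Let u : {poly R} := 1 - 'X ^+ 2.

Definition lienard_r2 : {poly R} :=
  'X * ((2 * k - 2)%:R *: u ^+ (k - 1) - (2 * k + 1)%:R *: u ^+ k).

Definition lienard_r4 : {poly R} :=
  ('X * ((2 * k)%:R *: u ^+ (k - 1) - (2 * k - 1)%:R *: u ^+ k))^`().

Definition Hnum_poly (y : R) : {poly R} :=
  u ^+ (2 * k) + ((2 * k)%:R * y) *: ('X * u ^+ k) + (k%:R * y ^+ 2)%:P.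

Definition Hden_poly (y : R) : {poly R} :=
  u ^+ (2 * k - 1) + ((2 * k - 1)%:R * y) *: ('X * u ^+ (k - 1))
  + ((2 * k - 1)%:R / 2 * y ^+ 2)%:P.

Local Notation N s y := (Hnum k 'X s y).
Local Notation D s y := (Hden k 'X s y).
Local Notation N_s s y := ((Hnum_poly y)^`().[s]).
Local Notation D_s s y := ((Hden_poly y)^`().[s]).
Local Notation N_y s y := ((2 * k)%:R * s * (1 - s ^+ 2) ^+ k + (2 * k)%:R * y).
Local Notation D_y s y :=
  ((2 * k - 1)%:R * s * (1 - s ^+ 2) ^+ (k - 1) + (2 * k - 1)%:R * y).

Lemma horner_Hnum_poly s y : (Hnum_poly y).[s] = N s y.
Proof.
rewrite /Hnum_poly /Hnum /u.
rewrite !(hornerD, hornerN, hornerZ, hornerM, hornerC, hornerX, horner_exp).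
by ring.
Qed.

Lemma horner_Hden_poly s y : (Hden_poly y).[s] = D s y.
Proof.
rewrite /Hden_poly /Hden /u.
rewrite !(hornerD, hornerN, hornerZ, hornerM, hornerC, hornerX, horner_exp).
by ring.
Qed.

Lemma is_derive_Hnum_s (s y : R) : is_derive s 1 (Hnum k 'X ^~ y) (N_s s y).
Proof.
have -> : Hnum k 'X ^~ y = horner (Hnum_poly y).
  by apply/funext => t; rewrite horner_Hnum_poly.
exact: is_derive_poly.
Qed.

Lemma is_derive_Hden_s (s y : R) : is_derive s 1 (Hden k 'X ^~ y) (D_s s y).
Proof.
have -> : Hden k 'X ^~ y = horner (Hden_poly y).
  by apply/funext => t; rewrite horner_Hden_poly.
exact: is_derive_poly.
Qed.

Lemma is_derive_Hnum_y (s y : R) : is_derive y 1 (Hnum k 'X s) (N_y s y).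
Proof.
rewrite /Hnum hornerX.
have := is_derive_quadratic ((1 - s ^+ 2) ^+ (2 * k))
  ((2 * k)%:R * s * (1 - s ^+ 2) ^+ k) k%:R y.
by move/is_derive_eq; apply; rewrite -natrM.
Qed.

Lemma is_derive_Hden_y (s y : R) : is_derive y 1 (Hden k 'X s) (D_y s y).
Proof.
rewrite /Hden hornerX.
have := is_derive_quadratic ((1 - s ^+ 2) ^+ (2 * k - 1))
  ((2 * k - 1)%:R * s * (1 - s ^+ 2) ^+ (k - 1)) ((2 * k - 1)%:R / 2) y.
by move/is_derive_eq; apply; field.
Qed.

Lemma lienard_identity s y :
  ((2 * k - 1)%:R * N_s s y * D s y - (2 * k)%:R * N s y * D_s s y)
    * (- y + lienard_r2.[s])
  + ((2 * k - 1)%:R * N_y s y * D s y - (2 * k)%:R * N s y * D_y s y)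
    * (y * lienard_r4.[s]) = 0.
Proof.
rewrite /Hnum /Hden /Hnum_poly /Hden_poly /lienard_r2 /lienard_r4 /u.
rewrite !(derivD, derivN, derivB, derivZ, derivM, deriv_exp, derivC, derivX, derivXn).
rewrite !(hornerD, hornerN, hornerZ, hornerM, hornerC, hornerX, horner_exp, hornerXn,
  hornerMn).
rewrite -!expr2.
(* u^(k-2) occurs only multiplied by k - 1; for k >= 2 every power of u is
   u^c * (u^(k-2))^e, which turns the claim into a rational identity. *)
case: k k_gt0 => [//|[|m]] _;
  rewrite !mul2n !doubleS ?subn1 ?subn2 ?addn1 /= -?addnn.
  by field.
rewrite !(exprS (1 - s ^+ 2)) !(exprD (1 - s ^+ 2)).
move: ((1 - s ^+ 2) ^+ m) => w.
by field.
Qed.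

Lemma first_integral_Hfun_X :
  first_integral (Hfun k 'X) (fun s y => - y + lienard_r2.[s])
    (fun s y => y * lienard_r4.[s]) [set p | Hden k 'X p.1 p.2 != 0].
Proof.
have k21 : (2 * k - 1 = (2 * k - 2).+1)%N by lia.
apply: first_integral_is_derive => s y /= D0; rewrite /Hfun k21.
do 2 eexists; split.
- exact: is_derive_pow_div_pow (is_derive_Hnum_s s y) (is_derive_Hden_s s y) D0.
- exact: is_derive_pow_div_pow (is_derive_Hnum_y s y) (is_derive_Hden_y s y) D0.
- by rewrite -k21 -mulrA -[_ * _ * (y * _)]mulrA -mulrDr lienard_identity mulr0.
Qed.

Lemma Hfun_horner (r : {poly R}) x y : Hfun k r x y = Hfun k 'X r.[x] y.
Proof. by rewrite /Hfun /Hnum /Hden hornerX. Qed.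

Lemma Hden_horner (r : {poly R}) x y : Hden k r x y = Hden k 'X r.[x] y.
Proof. by rewrite /Hden hornerX. Qed.

Lemma first_integral_Hfun (r : {poly R}) :
  first_integral (Hfun k r) (fun x y => - y + (lienard_r2 \Po r).[x])
    (fun x y => y * ((lienard_r4 \Po r) * r^`()).[x])
    [set p | Hden k r p.1 p.2 != 0].
Proof.
have -> : Hfun k r = fun x y => Hfun k 'X r.[x] y.
  by apply/funext => x; apply/funext => y; rewrite Hfun_horner.
have -> : [set p | Hden k r p.1 p.2 != 0] = [set p | Hden k 'X r.[p.1] p.2 != 0].
  by apply/funext => -[x y]; rewrite /= Hden_horner.
move=> x y D0; have [dx [dy e]] :=
  first_integral_comp (@derivable_horner _ r) first_integral_Hfun_X x y D0.
split=> //; split=> //.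
by rewrite -derivE in e; rewrite hornerM !horner_comp [y * _]mulrA.
Qed.
End LienardFirstIntegral.

Theorem mainTheorem8 (R : realType) (k : nat) (r : {poly R}) :
  (1 <= k)%N ->
  exists r2 r4 : {poly R},
    first_integral (Hfun k r)
      (fun x y => - y + r2.[x]) (fun x y => y * r4.[x])
      [set p | Hden k r p.1 p.2 != 0].
Proof.
move=> k_gt0; exists (lienard_r2 R k \Po r), ((lienard_r4 R k \Po r) * r^`()).
exact: first_integral_Hfun.
Qed.
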